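(* Let $\mathcal H=\mathbb C^2$. (1) If $c$ and $T$ are operators on $\mathcal H$ with $\{c,c^\dagger\}=\mathbb 1$, $c^2=0$, and $T=T^\dagger$ strictly positive, then $a:=TcT^{-1}$ and $b:=Tc^\dagger T^{-1}$ satisfy $\{a,b\}=\mathbb 1$, $a^2=0$, $b^2=0$. (2) Conversely, if $a,b$ are operators on $\mathcal H=\mathbb C^2$ with $\{a,b\}=\mathbb 1$, $a^2=0$, $b^2=0$, then there exist operators $c$ and $T$ on $\mathcal H$ with $\{c,c^\dagger\}=\mathbb 1$, $c^2=0$, $T=T^\dagger$ strictly positive, such that $a=TcT^{-1}$ and $b=Tc^\dagger T^{-1}$.
   Context: $\{x,y\}=xy+yx$ denotes the anticommutator; $\mathbb 1$ is the identity on $\mathbb C^2$; operators on $\mathbb C^2$ are $2\times2$ complex matrices and $^\dagger$ denotes the adjoint with respect to the standard inner product. *)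

(* Complex numbers: an arbitrary numClosedFieldType C
   (algebraically closed field with conjugation and the induced partial order). *)
From HB Require Import structures.
From mathcomp Require Import all_boot all_order all_algebra.
Set Implicit Arguments. Unset Strict Implicit. Unset Printing Implicit Defensive.
Import Order.TTheory GRing.Theory Num.Theory.
Local Open Scope ring_scope.

Definition adj {C : numClosedFieldType} {n : nat} (A : 'M[C]_n) : 'M[C]_n :=
  (map_mx Num.conj A)^T.

Definition anticomm {C : numClosedFieldType} {n : nat} (x y : 'M[C]_n) : 'M[C]_n :=
  x *m y + y *m x.

Definition strictly_pos {C : numClosedFieldType} {n : nat} (T : 'M[C]_n) : Prop :=
  adj T = T /\
  forall v : 'cV[C]_n, v != 0 -> 0 < ((map_mx Num.conj v)^T *m T *m v) ord0 ord0.

(* Conjugation by an invertible T preserves the relations {a,b} = 1,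
   a^2 = b^2 = 0.  Conversely, for such a pair put P = ab and Q = bab: from
   P + Q a = 1, aP = 0, aQ = P, bP = Q and bQ = 0, the Gram matrix
   M = P P^+ + Q Q^+ is strictly positive and satisfies M a^+ = b M.  With T
   the positive square root of M (spectral theorem), c = T^-1 a T then has
   c^+ = T a^+ T^-1 = T^-1 b T.  Nothing here depends on the dimension being 2. *)

From HB Require Import structures.
From mathcomp Require Import all_boot all_order all_algebra.
Set Implicit Arguments.
Unset Strict Implicit.
Unset Printing Implicit Defensive.

Import Order.TTheory GRing.Theory Num.Theory.
Local Open Scope ring_scope.
Local Open Scope sesquilinear_scope.

Section Adjoint.
Variables (C : numClosedFieldType) (n : nat).
Implicit Types A B : 'M[C]_n.

Lemma adjE A : adj A = A ^t*.
Proof. exact: map_trmx. Qed.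

Lemma trmxC_mul m p q (A : 'M[C]_(m, p)) (B : 'M[C]_(p, q)) :
  (A *m B) ^t* = B ^t* *m A ^t*.
Proof. by rewrite trmx_mul map_mxM. Qed.

Lemma adjM A B : adj (A *m B) = adj B *m adj A.
Proof. by rewrite !adjE trmxC_mul. Qed.

Lemma adjK A : adj (adj A) = A.
Proof. by rewrite !adjE trmxCK. Qed.

Lemma adjD A B : adj (A + B) = adj A + adj B.
Proof. by apply/matrixP=> i j; rewrite !mxE rmorphD. Qed.

Lemma adj0 : adj (0 : 'M[C]_n) = 0.
Proof. by apply/matrixP=> i j; rewrite !mxE rmorph0. Qed.

Lemma adj_scalar (k : C) : adj (k%:M : 'M[C]_n) = k^*%:M.
Proof. by apply/matrixP=> i j; rewrite !mxE rmorphMn eq_sym. Qed.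

Lemma adj_diag (d : 'rV[C]_n) : adj (diag_mx d) = diag_mx (map_mx Num.conj d).
Proof. by rewrite /adj map_diag_mx tr_diag_mx. Qed.

Lemma adj_inv A : adj (invmx A) = invmx (adj A).
Proof. by rewrite /adj map_invmx trmx_inv. Qed.

Lemma unitary_adj_invmx A : A \is unitarymx -> invmx A = adj A.
Proof. by move=> /invmx_unitary->; rewrite adjE. Qed.

Lemma trmxC_mul_self_ge0 (v : 'cV[C]_n) : 0 <= (v ^t* *m v) 0 0.
Proof.
by rewrite mxE; apply: sumr_ge0 => i _; rewrite !mxE -normCKC exprn_ge0.
Qed.

Lemma trmxC_mul_self_eq0 (v : 'cV[C]_n) : ((v ^t* *m v) 0 0 == 0) = (v == 0).
Proof.
apply/idP/eqP=> [|->]; last by rewrite mulmx0 mxE.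
rewrite mxE psumr_eq0 => [/allP v0|i _]; last by rewrite !mxE -normCKC exprn_ge0.
apply/matrixP=> i j; rewrite (ord1 j) mxE.
have := v0 i (mem_index_enum i).
by rewrite !mxE -normCKC expf_eq0 normr_eq0 => /eqP.
Qed.

End Adjoint.

Section StrictlyPositive.
Variables (C : numClosedFieldType) (n : nat).
Implicit Types (A P Q : 'M[C]_n) (v : 'cV[C]_n).

Lemma strictly_posE A : strictly_pos A <->
  adj A = A /\ forall v, v != 0 -> 0 < (v ^t* *m A *m v) 0 0.
Proof.
by split=> -[AA Apos]; split=> // v /Apos; rewrite map_trmx.
Qed.

Lemma strictly_pos_unit A : strictly_pos A -> A \in unitmx.
Proof.
move=> /strictly_posE[_ Apos]; rewrite unitmxE unitfE -det_tr.
apply/negP=> /det0P[w w0 wA0].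
have Aw0 : A *m w^T = 0 by rewrite -[A]trmxK -trmx_mul wA0 trmx0.
have := Apos w^T; rewrite -mulmxA Aw0 mulmx0 mxE ltxx.
by rewrite -trmx0 (inj_eq trmx_inj) => /(_ w0).
Qed.

Lemma strictly_pos_congr A P :
  strictly_pos A -> P \in unitmx -> strictly_pos (adj P *m A *m P).
Proof.
move=> /strictly_posE[AA Apos] uP; apply/strictly_posE; split.
  by rewrite !adjM adjK AA mulmxA.
move=> v v0; have Pv0 : P *m v != 0.
  by apply: contra v0 => /eqP Pv; rewrite -(mulKmx uP v) Pv mulmx0.
by rewrite adjE !mulmxA -trmxC_mul -!mulmxA mulmxA; apply: Apos.
Qed.

Lemma strictly_pos_gram P Q :
  (forall v, adj P *m v = 0 -> adj Q *m v = 0 -> v = 0) ->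
  strictly_pos (P *m adj P + Q *m adj Q).
Proof.
move=> ker0; apply/strictly_posE; split; first by rewrite adjD !adjM !adjK.
move=> v v0; have form_gram R : v ^t* *m (R *m adj R) *m v
    = (adj R *m v) ^t* *m (adj R *m v).
  by rewrite trmxC_mul -adjE adjK !mulmxA.
rewrite mulmxDr mulmxDl !form_gram mxE lt_def addr_ge0 ?trmxC_mul_self_ge0 //.
rewrite paddr_eq0 ?trmxC_mul_self_ge0 // !trmxC_mul_self_eq0 andbT.
by apply: contra v0 => /andP[/eqP Pv /eqP Qv]; rewrite (ker0 v Pv Qv).
Qed.

Lemma strictly_pos_diag (d : 'rV[C]_n) :
  (forall j, 0 < d 0 j) -> strictly_pos (diag_mx d).
Proof.
move=> d_gt0; apply/strictly_posE; split.
  rewrite adj_diag; congr diag_mx; apply/matrixP=> i j.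
  by rewrite mxE (ord1 i) geC0_conj ?ltW.
move=> v v0; have term_ge0 k : 0 <= (v ^t*) 0 k * d 0 k * v k 0.
  by rewrite mulrAC !mxE -normCKC mulr_ge0 ?exprn_ge0 // ltW.
rewrite mul_mx_diag mxE lt_def sumr_ge0 ?andbT => [|k _]; last by rewrite mxE.
apply: contra v0; rewrite psumr_eq0 => [/allP dv0|k _]; last by rewrite mxE.
apply/eqP/matrixP=> k j; rewrite (ord1 j) mxE.
have := dv0 k (mem_index_enum k); rewrite !mxE mulrAC -normCKC /=.
by rewrite mulf_eq0 (gt_eqF (d_gt0 k)) orbF expf_eq0 normr_eq0 => /eqP.
Qed.

Lemma strictly_pos_diag_gt0 A j : strictly_pos A -> 0 < A j j.
Proof.
move=> /strictly_posE[_ Apos]; have e0 : delta_mx j 0 != 0 :> 'cV[C]_n.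
  apply/negP=> /eqP/matrixP/(_ j 0).
  by rewrite !mxE !eqxx => /eqP; rewrite oner_eq0.
by have := Apos _ e0; rewrite trmx_delta map_delta_mx -rowE -colE !mxE.
Qed.

Lemma strictly_pos_sqrt A :
  strictly_pos A -> exists2 S, strictly_pos S & S *m S = A.
Proof.
move=> Apos; have /orthomx_spectralP : A \is normalmx.
  by apply/normalmxP; rewrite -adjE Apos.1.
set P := spectralmx A; set d := spectral_diag A.
have uP : P \is unitarymx := spectral_unitarymx A.
rewrite unitary_adj_invmx // => defA.
have PadjP : P *m adj P = 1%:M by rewrite adjE; apply/unitarymxP.
have d_gt0 j : 0 < d 0 j.
  have uadjP : adj P \in unitmx.
    by rewrite -unitary_adj_invmx ?unitmx_inv ?unitarymx_unit.
  have := strictly_pos_diag_gt0 j (strictly_pos_congr Apos uadjP).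
  by rewrite adjK defA !mulmxA PadjP mul1mx -mulmxA PadjP mulmx1 mxE eqxx mulr1n.
pose r := map_mx sqrtC d; exists (adj P *m diag_mx r *m P).
  apply: strictly_pos_congr; last exact: unitarymx_unit.
  by apply: strictly_pos_diag => j; rewrite mxE sqrtC_gt0.
rewrite defA !mulmxA -(mulmxA _ P) PadjP mulmx1 -(mulmxA (adj P)) mulmx_diag.
congr (_ *m diag_mx _ *m _); apply/rowP=> j.
by rewrite !mxE -expr2 sqrtCK.
Qed.

End StrictlyPositive.

Section CanonicalAnticommutation.
Variables (C : numClosedFieldType) (n : nat).
Implicit Types a b c x y V : 'M[C]_n.

Definition car_pair a b := [/\ anticomm a b = 1%:M, a *m a = 0 & b *m b = 0].

Lemma car_pair_adj c :
  anticomm c (adj c) = 1%:M -> c *m c = 0 -> car_pair c (adj c).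
Proof. by move=> cc1 c2; split; rewrite // -adjM c2 adj0. Qed.

Lemma conjumxM V x y : V \in unitmx ->
  conjmx V (x *m y) = conjmx V x *m conjmx V y.
Proof. by move=> uV; rewrite conjmxM ?inE ?stablemx_unit. Qed.

Lemma anticomm_conjumx V x y : V \in unitmx ->
  anticomm (conjmx V x) (conjmx V y) = conjmx V (anticomm x y).
Proof. by move=> uV; rewrite /anticomm -!conjumxM // /conjmx mulmxDr mulmxDl. Qed.

Lemma car_pair_conjmx V a b :
  V \in unitmx -> car_pair a b -> car_pair (conjmx V a) (conjmx V b).
Proof.
move=> uV [ab1 a2 b2]; split; rewrite ?anticomm_conjumx -?conjumxM //.
- by rewrite ab1 conjmx_scalar ?row_free_unit.
- by rewrite a2 conjmx0.
- by rewrite b2 conjmx0.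
Qed.

Lemma car_pair_intertwiner a b :
  car_pair a b -> exists2 M, strictly_pos M & M *m adj a = b *m M.
Proof.
move=> [ab1 a2 b2]; pose P := a *m b; pose Q := b *m P.
have aP : a *m P = 0 by rewrite mulmxA a2 mul0mx.
have Pa : P *m a = a.
  have : a *m anticomm a b = a by rewrite ab1 mulmx1.
  by rewrite mulmxDr mulmxA a2 mul0mx add0r mulmxA.
have aQ : a *m Q = P by rewrite mulmxA -/P mulmxA Pa.
have bQ : b *m Q = 0 by rewrite mulmxA b2 mul0mx.
have PQa : P + Q *m a = 1%:M by rewrite -mulmxA Pa.
have bP : b *m P = Q by [].
clearbody P Q.
exists (P *m adj P + Q *m adj Q).
  apply: strictly_pos_gram => v Pv Qv.
  have -> : v = adj (P + Q *m a) *m v by rewrite PQa adj_scalar conjC1 mul1mx.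
  by rewrite adjD adjM mulmxDl Pv -mulmxA Qv mulmx0 addr0.
rewrite mulmxDl mulmxDr -!mulmxA -!adjM aP aQ adj0 mulmx0 add0r.
by rewrite !mulmxA bP bQ mul0mx addr0.
Qed.

Lemma car_pair_adj_similar a b : car_pair a b ->
  exists2 T, strictly_pos T & adj (conjmx (invmx T) a) = conjmx (invmx T) b.
Proof.
move=> ab; have [M Mpos Ma] := car_pair_intertwiner ab.
have [T Tpos TT] := strictly_pos_sqrt Mpos; have uT := strictly_pos_unit Tpos.
exists T => //; rewrite !conjVmx // !adjM adj_inv Tpos.1 mulmxA.
have -> : T *m adj a *m invmx T = invmx T *m (M *m adj a) *m invmx T.
  by rewrite -TT -!mulmxA mulKmx.
by rewrite Ma -TT !mulmxA mulmxK.
Qed.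

End CanonicalAnticommutation.

Theorem mainTheorem3 (C : numClosedFieldType) :
  (forall c T : 'M[C]_2,
     anticomm c (adj c) = 1%:M -> c *m c = 0 -> strictly_pos T ->
     let a := T *m c *m invmx T in
     let b := T *m adj c *m invmx T in
     anticomm a b = 1%:M /\ a *m a = 0 /\ b *m b = 0)
  /\
  (forall a b : 'M[C]_2,
     anticomm a b = 1%:M -> a *m a = 0 -> b *m b = 0 ->
     exists c T : 'M[C]_2,
       [/\ anticomm c (adj c) = 1%:M, c *m c = 0, strictly_pos T,
           a = T *m c *m invmx T & b = T *m adj c *m invmx T]).
Proof.
split=> [c T cc1 c2 Tpos a b | a b ab1 a2 b2].
  have uT := strictly_pos_unit Tpos; rewrite /a /b -!conjumx //.
  by have [] := car_pair_conjmx uT (car_pair_adj cc1 c2).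
have ab : car_pair a b by [].
have [T Tpos adj_c] := car_pair_adj_similar ab; have uT := strictly_pos_unit Tpos.
have uTi : invmx T \in unitmx by rewrite unitmx_inv.
have [cc1 c2 _] := car_pair_conjmx uTi ab.
exists (conjmx (invmx T) a), T.
by rewrite adj_c -!conjumx // !conjmxVK.
Qed.
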